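(* Let $n\geq 5$, let $S$ be the set of all $3$-cycles in $S_n$, and let $CAG_n=\mathrm{Cay}(A_n,S)$. Let $A_e$ be the set of automorphisms of $CAG_n$ that fix the identity vertex $e$ and each of its neighbours. Then $A_e=\{1\}$.
   Context: For a finite group $\Gamma$ and a subset $T\subseteq\Gamma$ with $e\notin T$ and $T=T^{-1}$, the Cayley graph $\mathrm{Cay}(\Gamma,T)$ is the undirected graph with vertex set $\Gamma$ and edge set $\{\{\gamma,t\gamma\}\mid \gamma\in\Gamma, t\in T\}$. The neighbours of $e$ in $CAG_n$ are exactly the elements of $S$. *)

From mathcomp Require Import all_boot all_fingroup all_solvable.
Set Implicit Arguments. Unset Strict Implicit. Unset Printing Implicit Defensive.
Local Open Scope group_scope.

Definition three_cycle (n : nat) (s : 'S_n) : Prop :=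
  exists a b c : 'I_n,
    [/\ a != b, b != c, a != c,
        [/\ s a = b, s b = c & s c = a]
      & forall x, x != a -> x != b -> x != c -> s x = x].

Definition An_vertex (n : nat) := subg_of (Alt_group 'I_n).

(* Adjacency in Cay(A_n, S): {gamma, t gamma} with t a 3-cycle, i.e.
   y = t * x with t in S, i.e. y * x^-1 in S. *)
Definition cag_adj (n : nat) (x y : An_vertex n) : Prop :=
  three_cycle (sgval y * (sgval x)^-1).

Definition cag_aut (n : nat) (g : {perm An_vertex n}) : Prop :=
  forall x y : An_vertex n, cag_adj (g x) (g y) <-> cag_adj x y.

Definition A_e (n : nat) (g : {perm An_vertex n}) : Prop :=
  [/\ cag_aut g, g 1 = 1 & forall x, cag_adj 1 x -> g x = x].

From mathcomp Require Import all_boot all_fingroup all_solvable.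
Set Implicit Arguments. Unset Strict Implicit. Unset Printing Implicit Defensive.
Local Open Scope group_scope.

(* Adjacency in CAG_n is Hamming distance 3 between permutations.  Let g fix e
   and its neighbours.  A vertex v at distance 2 from e, i.e. a product of two
   3-cycles, is at Hamming distance 3 from a suitable list of test vertices
   already known to be fixed, hence so is g v; as the sum over the points i of the
   number of tests w with w i <> x i is the sum of the distances from x to the
   tests, this forces g v and v to agree at every point (for a 5-cycle the
   count leaves only v or e, and g v <> g e = e).  Applying this to the
   translates x |-> g (x h) h^-1 propagates "g fixes h and its neighbours"
   along edges, and A_n is generated by 3-cycles since it is simple. *)

Lemma negbTE_sym (T : eqType) (x y : T) : x != y -> (y == x) = false.
Proof. by rewrite eq_sym => /negbTE. Qed.

Ltac add_sym_neqs := repeat match goal with H : is_true (?x != ?y) |- _ =>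
  lazymatch goal with
  | _ : is_true (y != x) |- _ => fail
  | _ => have : y != x by rewrite eq_sym
  end; move=> ? end.

Ltac simpl_eqs := repeat match goal with
  | |- context [?x == ?x] => rewrite eqxx
  | H : is_true (?x != ?y) |- context [?x == ?y] => rewrite (negbTE H)
  | H : is_true (?x != ?y) |- context [?y == ?x] => rewrite (negbTE_sym H)
  end; rewrite /=.

Ltac case_points := simpl_eqs; repeat (match goal with
  |- context [?x == ?y] => is_var x; is_var y;
     case: (x =P y) => [?|/eqP ?]; [first [subst x | subst y]|] end; simpl_eqs).

Lemma cards3 (T : finType) (a b c : T) : a != b -> b != c -> a != c ->
  #|[set a; b; c]| = 3.
Proof. by move=> ab bc ac; rewrite -setUA cardsU1 cards2 !inE negb_or ab ac bc. Qed.

Lemma cards3P (T : finType) (A : {set T}) : #|A| = 3 ->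
  exists a b c, [/\ a != b, b != c, a != c & A = [set a; b; c]].
Proof.
move=> A3; have /card_gt2P [a [b [c [[aA bA cA] [ab bc ca]]]]] : 2 < #|A| by rewrite A3.
have ac : a != c by rewrite eq_sym.
exists a, b, c; split => //; apply/eqP; rewrite eq_sym eqEcard; apply/andP; split.
  by apply/subsetP => i; rewrite !inE => /orP [/orP [] | ] /eqP ->.
by rewrite A3 cards3.
Qed.

Section Hamming.
Variable n : nat.
Implicit Types x y h : 'S_n.

Definition hamming x y := #|[set i | x i != y i]|.

Lemma hammingMr x y h : hamming (x * h) (y * h) = hamming x y.
Proof.
by apply: eq_card => i; rewrite !inE !permM (inj_eq (@perm_inj _ h)).
Qed.

Lemma hammingMl x y h : hamming (h * x) (h * y) = hamming x y.
Proof.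
rewrite /hamming -[RHS](card_preimset _ (@perm_inj _ h)).
by apply: eq_card => i; rewrite !inE !permM.
Qed.

Lemma hamming1J x h : hamming 1 (x ^ h) = hamming 1 x.
Proof.
rewrite conjgE -(hammingMl _ _ h) mulg1 !mulgA mulgV mul1g.
by rewrite -(hammingMr _ _ h^-1) mulgV mulgK.
Qed.

Lemma hamming_support3 x y (a b c : 'I_n) : a != b -> b != c -> a != c ->
  (forall i, (x i != y i) = [|| i == a, i == b | i == c]) -> hamming x y = 3.
Proof.
move=> ab bc ac xy; rewrite /hamming -(cards3 ab bc ac).
by apply: eq_card => i; rewrite !inE xy orbA.
Qed.

End Hamming.

Section Cycle3.
Variable n : nat.
Implicit Types a b c d i : 'I_n.

(* Locked, so that [permM] cannot see the product inside. *)
Definition cycle3 a b c : 'S_n := locked (tperm a b * tperm a c).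

Lemma cycle3E a b c i : a != b -> b != c -> a != c ->
  cycle3 a b c i = if i == a then b else if i == b then c else if i == c then a else i.
Proof.
move=> ab bc ac; add_sym_neqs; by rewrite /cycle3 -lock permM !permE /=; case_points.
Qed.

Lemma cycle3_rot a b c : a != b -> b != c -> a != c -> cycle3 a b c = cycle3 b c a.
Proof.
move=> ab bc ac; add_sym_neqs; by apply/permP => i; rewrite !cycle3E //; case_points.
Qed.

Lemma cycle3_hamming a b c : a != b -> b != c -> a != c -> hamming 1 (cycle3 a b c) = 3.
Proof.
move=> ab bc ac; apply: (hamming_support3 ab bc ac) => i.
by rewrite perm1 cycle3E //; add_sym_neqs; case_points.
Qed.

Lemma cycle3_Alt a b c : a != b -> a != c -> cycle3 a b c \in 'Alt_'I_n.
Proof. by move=> ab ac; rewrite Alt_even /cycle3 -lock odd_permM !odd_tperm ab ac. Qed.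

Lemma exists_fresh4 a b c d : 4 < n ->
  exists y, [/\ a != y, b != y, c != y & d != y].
Proof.
move=> n4; have : #|~: [set a; b; c; d]| > 0.
  rewrite cardsCs setCK card_ord subn_gt0 (leq_ltn_trans _ n4) //.
  apply: leq_trans (card_size [:: a; b; c; d]); apply: subset_leq_card.
  by apply/subsetP => x; rewrite !inE -!orbA.
case/card_gt0P => y; rewrite !inE -!orbA !negb_or => /and4P [ya yb yc yd].
by exists y; rewrite !(eq_sym _ y).
Qed.

Lemma three_cycleP (p : 'S_n) :
  three_cycle p <-> exists a b c, [/\ a != b, b != c, a != c & p = cycle3 a b c].
Proof.
split=> [[a [b [c [ab bc ac [pa pb pc] pi]]]] | [a [b [c [ab bc ac ->]]]]].
  exists a, b, c; split=> //; apply/permP => i; rewrite cycle3E //.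
  case: (i =P a) => [->|/eqP ia] //; case: (i =P b) => [->|/eqP ib] //.
  by case: (i =P c) => [->|/eqP ic] //; rewrite pi.
exists a, b, c; add_sym_neqs; split=> // [|i ia ib ic]; rewrite !cycle3E //.
  by split; case_points.
by case_points.
Qed.

Lemma hamming1_three_cycle (p : 'S_n) : hamming 1 p = 3 -> three_cycle p.
Proof.
case/cards3P=> a [b [c [ab bc ac supp]]].
have moved i : (p i != i) = [|| i == a, i == b | i == c].
  by move/setP/(_ i): supp; rewrite !inE perm1 eq_sym -orbA.
have stay i : p i != i -> [|| p i == a, p i == b | p i == c].
  by rewrite -moved (inj_eq perm_inj).
have pinj i j : i != j -> p i != p j by rewrite (inj_eq perm_inj).
have ma : p a != a by rewrite moved eqxx.
have mb : p b != b by rewrite moved eqxx orbT.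
have mc : p c != c by rewrite moved eqxx !orbT.
have fix_out i : i != a -> i != b -> i != c -> p i = i.
  by move=> ia ib ic; apply/eqP; rewrite -[_ == _]negbK moved (negbTE ia) (negbTE ib) (negbTE ic).
case/or3P: (stay a ma) => /eqP pa; case/or3P: (stay b mb) => /eqP pb;
  case/or3P: (stay c mc) => /eqP pc;
  move: (pinj _ _ ab) (pinj _ _ bc) (pinj _ _ ac) ma mb mc; rewrite pa pb pc ?eqxx //.
- by exists a, b, c.
- by exists a, c, b; rewrite eq_sym; split=> // i ia ic ib; apply: fix_out.
Qed.

Lemma three_cycle_hamming (p : 'S_n) : three_cycle p <-> hamming 1 p = 3.
Proof.
split=> [/three_cycleP [a [b [c [ab bc ac ->]]]]|]; first exact: cycle3_hamming.
exact: hamming1_three_cycle.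
Qed.

Lemma cycle3M_self a b c : a != b -> b != c -> a != c ->
  cycle3 a b c * cycle3 a b c = cycle3 a c b.
Proof.
by move=> ab bc ac; add_sym_neqs; apply/permP => i; rewrite !permM !cycle3E //; case_points.
Qed.

Lemma cycle3M_reverse a b c : a != b -> b != c -> a != c ->
  cycle3 a b c * cycle3 a c b = 1.
Proof.
by move=> ab bc ac; add_sym_neqs; apply/permP => i; rewrite perm1 !permM !cycle3E //; case_points.
Qed.

Lemma cycle3M_shared_edge a b c q : a != b -> b != c -> a != c -> a != q -> b != q -> c != q ->
  cycle3 a b c * cycle3 a q b = cycle3 b c q.
Proof.
by move=> *; add_sym_neqs; apply/permP => i; rewrite !permM !cycle3E //; case_points.
Qed.

End Cycle3.

Lemma cag_adjE n (x y : An_vertex n) : cag_adj x y <-> hamming (sgval x) (sgval y) = 3.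
Proof.
rewrite -(hammingMr _ _ (sgval x)^-1) mulgV; exact: three_cycle_hamming.
Qed.

Lemma cag_adj1 n (x : An_vertex n) : cag_adj 1 x <-> three_cycle (sgval x).
Proof. by rewrite /cag_adj invg1 mulg1. Qed.

Section Tests.
Variable n : nat.
Implicit Types (ws : seq 'S_n) (v : 'S_n).

Definition mismatches ws (y i : 'I_n) := count (fun w : 'S_n => y != w i) ws.

Lemma sum_mismatches ws v : \sum_i mismatches ws (v i) i = \sum_(w <- ws) hamming v w.
Proof.
under eq_bigr => i _ do rewrite /mismatches -sum1_count big_mkcond /=.
rewrite exchange_big /=; apply: eq_bigr => w _.
by rewrite /hamming -sum1_card [RHS]big_mkcond /=; apply: eq_bigr => i _; rewrite inE.
Qed.

Definition pinned ws v (R : rel 'I_n) := forall i z,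
  (mismatches ws (v i) i <= mismatches ws z i) &&
  ((mismatches ws z i == mismatches ws (v i) i) ==> R i z).

Lemma pinned_same_distances ws v u R :
  pinned ws v R -> {in ws, forall w, hamming u w = hamming v w} -> forall i, R i (u i).
Proof.
move=> pin dist; have le i : mismatches ws (v i) i <= mismatches ws (u i) i.
  by case/andP: (pin i (u i)).
have : \sum_i mismatches ws (v i) i == \sum_i mismatches ws (u i) i.
  by rewrite !sum_mismatches; apply/eqP/eq_big_seq => w /dist.
rewrite (leqif_sum (fun i _ => leqif_eq (le i))).2 => /forall_inP eq_i i.
by case/andP: (pin i (u i)) => _; rewrite eq_sym eq_i.
Qed.

Definition between (u v : 'S_n) := forall i, (u i == v i) || (u i == i).

Lemma between_fwd (u v : 'S_n) x : between u v ->
  v x != x -> u x = v x -> u (v x) = v (v x).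
Proof.
move=> near vx ux; case/orP: (near (v x)) => /eqP // uvx.
by case/negP: vx; apply/eqP/(@perm_inj _ u); rewrite uvx.
Qed.

Lemma between_bwd (u v : 'S_n) x : between u v ->
  v x != x -> u (v x) = v x -> u x = x.
Proof.
move=> near vx uvx; case/orP: (near x) => /eqP // ux.
by case/negP: vx; apply/eqP/(@perm_inj _ u); rewrite uvx.
Qed.

Lemma between_cycle5 (u : 'S_n) (a b c q r : 'I_n) :
  a != b -> a != c -> a != q -> a != r -> b != c -> b != q -> b != r ->
  c != q -> c != r -> q != r ->
  between u (cycle3 a b c * cycle3 a q r) -> u = cycle3 a b c * cycle3 a q r \/ u = 1.
Proof.
move=> ab ac aq ar bc bq br cq cr qr near; add_sym_neqs; set v := _ * _ in near *.
have v_at j : v j = if j == a then b else if j == b then c else if j == c then q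
                    else if j == q then r else if j == r then a else j.
  by rewrite permM !cycle3E //; case_points.
have [va vb vc vq vr] : [/\ v a = b, v b = c, v c = q, v q = r & v r = a].
  by rewrite !v_at; split; case_points.
have fix_v j : v j = j -> u j = j by move=> vj; move: (near j); rewrite vj orbb => /eqP.
have fwd := between_fwd near; have bwd := between_bwd near.
case/orP: (near a) => /eqP ua; [left | right]; apply/permP => j.
  rewrite va in ua.
  have ub : u b = c by move: (fwd a); rewrite va vb; apply.
  have uc : u c = q by move: (fwd b); rewrite vb vc; apply.
  have uq : u q = r by move: (fwd c); rewrite vc vq; apply.
  have ur : u r = a by move: (fwd q); rewrite vq vr; apply.
  have [/eqP vj|] := boolP (v j == j); first by rewrite vj fix_v.
  by rewrite v_at; case_points.
have ur : u r = r by move: (bwd r); rewrite vr; apply.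
have uq : u q = q by move: (bwd q); rewrite vq; apply.
have uc : u c = c by move: (bwd c); rewrite vc; apply.
have ub : u b = b by move: (bwd b); rewrite vb; apply.
have [/eqP vj|] := boolP (v j == j); first by rewrite perm1 fix_v.
by rewrite perm1 v_at; case_points.
Qed.

End Tests.

Ltac in_list_cases := move=> ?; rewrite !in_cons in_nil orbF; repeat case/orP; move/eqP=> ->.

Ltac hamming_on a b c := apply: (@hamming_support3 _ _ _ a b c) => // ?;
  by rewrite !permM !cycle3E //; case_points.

Ltac pinned_by_cases := move=> i z; rewrite /mismatches /= !permM !cycle3E //; case_points.

Section Sphere2.
Variable n : nat.
Local Notation V := (An_vertex n).

Definition vtx (p : 'S_n) : V := subg (Alt_group 'I_n) p.

Lemma vtx1 : vtx 1 = 1.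
Proof. by apply: subg_inj; rewrite subgK. Qed.

Variable G : V -> V.
Hypotheses (G_inj : injective G) (G_adj : forall x y, cag_adj (G x) (G y) <-> cag_adj x y)
  (G1 : G 1 = 1) (G_nbhd1 : forall x, cag_adj 1 x -> G x = x).

Definition fixed (p : 'S_n) := G (vtx p) = vtx p.

Lemma fixed1 : fixed 1.
Proof. by rewrite /fixed vtx1. Qed.

Lemma fixed_cycle3 (a b c : 'I_n) : a != b -> b != c -> a != c -> fixed (cycle3 a b c).
Proof.
move=> ab bc ac; apply: G_nbhd1.
apply/cag_adj1/three_cycleP; rewrite subgK ?cycle3_Alt //.
by exists a, b, c.
Qed.

Lemma pinned_image ws v R : v \in 'Alt_'I_n ->
  {in ws, forall w, w \in 'Alt_'I_n /\ fixed w} -> {in ws, forall w, hamming v w = 3} -> pinned ws v R ->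
  forall i, R i (sgval (G (vtx v)) i).
Proof.
move=> Av tests dist pin; apply: (pinned_same_distances pin) => w wws.
have [Aw fw] := tests w wws; rewrite dist //.
by rewrite -[w](subgK _ Aw) -/(vtx w) -fw; apply/cag_adjE/G_adj/cag_adjE; rewrite !subgK // dist.
Qed.

Lemma fixed_pinned ws v : v \in 'Alt_'I_n ->
  {in ws, forall w, w \in 'Alt_'I_n /\ fixed w} -> {in ws, forall w, hamming v w = 3} -> pinned ws v (fun i z => z == v i) -> fixed v.
Proof.
move=> Av tests dist pin; have := pinned_image Av tests dist pin => Gv.
by apply: subg_inj; rewrite subgK //; apply/permP => i; apply/eqP.
Qed.

Lemma fixed_5cycle (a b c q r : 'I_n) :
  a != b -> a != c -> a != q -> a != r -> b != c -> b != q -> b != r ->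
  c != q -> c != r -> q != r -> fixed (cycle3 a b c * cycle3 a q r).
Proof.
move=> ab ac aq ar bc bq br cq cr qr; add_sym_neqs.
set v := cycle3 a b c * cycle3 a q r.
have Av : v \in 'Alt_'I_n by rewrite groupM ?cycle3_Alt.
(* These five tests cannot tell v from 1 at any point; injectivity of G
   excludes the second alternative. *)
have near : between (sgval (G (vtx v))) v.
  apply: (@pinned_image [:: cycle3 a b c; cycle3 b c q; cycle3 c q r; cycle3 q r a; cycle3 r a b]
    _ (fun i z => (z == v i) || (z == i))) => //.
  - by in_list_cases; (split; [apply: cycle3_Alt | apply: fixed_cycle3]).
  - in_list_cases; rewrite /v; [> hamming_on c q r | hamming_on a q r | hamming_on a b r
                         | hamming_on a b c | hamming_on b c q].
  - by rewrite /v; pinned_by_cases.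
case: (between_cycle5 ab ac aq ar bc bq br cq cr qr near) => [Gv | G1v].
- by apply: subg_inj; rewrite Gv subgK.
have : G (vtx v) = G 1 by apply: subg_inj; rewrite G1v G1.
move/G_inj/(congr1 (fun x : V => sgval x a)); rewrite subgK // /v permM !cycle3E // perm1.
by simpl_eqs => /eqP; simpl_eqs.
Qed.

Ltac test_vertices := in_list_cases; (split; [by rewrite ?groupM ?cycle3_Alt |
  first [by apply: fixed_cycle3 | by apply: fixed_5cycle]]).

Lemma fixed_double_transposition (a b c r y : 'I_n) :
  a != b -> a != c -> a != r -> a != y -> b != c -> b != r -> b != y ->
  c != r -> c != y -> r != y -> fixed (cycle3 a b c * cycle3 a b r).
Proof.
move=> *; add_sym_neqs.
apply: (@fixed_pinned [:: cycle3 a b c; cycle3 a b r; cycle3 a c r;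
   cycle3 a r b * cycle3 a c y; cycle3 a r c * cycle3 a b y; cycle3 a r y * cycle3 a c b]).
- by rewrite groupM ?cycle3_Alt.
- by test_vertices.
- in_list_cases; [> hamming_on a c r | hamming_on a b c | hamming_on a b c
           | hamming_on c r y | hamming_on b r y | hamming_on b r y].
- by pinned_by_cases.
Qed.

Lemma fixed_disjoint_cycle3 (a b c p q r : 'I_n) :
  a != b -> a != c -> a != p -> a != q -> a != r -> b != c -> b != p -> b != q -> b != r ->
  c != p -> c != q -> c != r -> p != q -> p != r -> q != r ->
  fixed (cycle3 a b c * cycle3 p q r).
Proof.
move=> *; add_sym_neqs.
apply: (@fixed_pinned [:: cycle3 a b c; cycle3 a b p * cycle3 a q r;
   cycle3 a q r * cycle3 a p c; cycle3 b c r * cycle3 b p q]).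
- by rewrite groupM ?cycle3_Alt.
- by test_vertices.
- in_list_cases; [> hamming_on p q r | hamming_on b c r | hamming_on a b p | hamming_on a c q].
- by pinned_by_cases.
Qed.

Hypothesis n_gt4 : 4 < n.

Lemma fixed_cycle3M_shared (a b c q r : 'I_n) :
  a != b -> b != c -> a != c -> a != q -> a != r -> q != r ->
  fixed (cycle3 a b c * cycle3 a q r).
Proof.
move=> ab bc ac aq ar qr; add_sym_neqs.
case: (b =P q) => [?|/eqP bq]; first subst q.
  case: (c =P r) => [?|/eqP cr].
    by subst r; rewrite cycle3M_self //; apply: fixed_cycle3.
  have [y [a_y b_y c_y r_y]] := exists_fresh4 a b c r n_gt4.
  by apply: (@fixed_double_transposition a b c r y).
case: (b =P r) => [?|/eqP br]; first subst r.
  case: (c =P q) => [?|/eqP cq].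
    by subst q; rewrite cycle3M_reverse //; apply: fixed1.
  by rewrite cycle3M_shared_edge //; apply: fixed_cycle3.
case: (c =P q) => [?|/eqP cq]; first subst q.
  rewrite (cycle3_rot ab) // (cycle3_rot bc) // (cycle3_rot ac) // cycle3M_shared_edge //.
  exact: fixed_cycle3.
case: (c =P r) => [?|/eqP cr]; last by apply: fixed_5cycle.
subst r; have [y [a_y b_y c_y q_y]] := exists_fresh4 a b c q n_gt4.
rewrite (cycle3_rot ab) // (cycle3_rot bc) // (cycle3_rot aq) // (cycle3_rot qr) //.
by apply: (@fixed_double_transposition c a b q y).
Qed.

Lemma fixed_cycle3M_meet (a b c p q r : 'I_n) :
  a != b -> b != c -> a != c -> p != q -> q != r -> p != r ->
  a \in [:: p; q; r] -> fixed (cycle3 a b c * cycle3 p q r).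
Proof.
move=> ab bc ac pq qr pr; add_sym_neqs.
rewrite !inE => /or3P [] /eqP ?; subst a.
- exact: fixed_cycle3M_shared.
- by rewrite (cycle3_rot pq) //; apply: fixed_cycle3M_shared.
- by rewrite (cycle3_rot pq) // (cycle3_rot qr) //; apply: fixed_cycle3M_shared.
Qed.

Lemma fixed_cycle3M (a b c p q r : 'I_n) :
  a != b -> b != c -> a != c -> p != q -> q != r -> p != r ->
  fixed (cycle3 a b c * cycle3 p q r).
Proof.
move=> ab bc ac pq qr pr; add_sym_neqs.
have [a_in|a_out] := boolP (a \in [:: p; q; r]); first exact: fixed_cycle3M_meet.
have [b_in|b_out] := boolP (b \in [:: p; q; r]).
  by rewrite (cycle3_rot ab) //; apply: fixed_cycle3M_meet.
have [c_in|c_out] := boolP (c \in [:: p; q; r]).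
  by rewrite (cycle3_rot ab) // (cycle3_rot bc) //; apply: fixed_cycle3M_meet.
move: a_out b_out c_out; rewrite !inE !negb_or.
move=> /and3P [ap aq ar] /and3P [bp bq br] /and3P [cp cq cr].
exact: fixed_disjoint_cycle3.
Qed.

Lemma fixed_sphere2 (x s : V) : cag_adj 1 x -> cag_adj 1 s -> G (x * s) = x * s.
Proof.
move=> /cag_adj1/three_cycleP [a [b [c [ab bc ac ex]]]].
move=> /cag_adj1/three_cycleP [p [q [r [pq qr pr es]]]].
have := fixed_cycle3M ab bc ac pq qr pr; rewrite /fixed -ex -es.
by rewrite -[x * s]sgvalK.
Qed.

End Sphere2.

Lemma gen_prodg_ind (gT : finGroupType) (A : {set gT}) (P : gT -> Prop) :
  P 1 -> {in A, forall a x, P x -> P (a * x)} -> {in <<A>>, forall x, P x}.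
Proof.
move=> P1 PM _ /gen_prodgP [k [c cA ->]].
elim: k c cA => [|k IH] c cA; first by rewrite big_ord0.
by rewrite big_ord_recl; apply: (PM _ (cA ord0)); apply: IH.
Qed.

Section Propagation.
Variable n : nat.
Hypothesis n_gt4 : 4 < n.
Local Notation V := (An_vertex n).

Definition three_cycles := [set p : 'S_n | hamming 1 p == 3].

Lemma three_cycles_Alt : three_cycles \subset 'Alt_'I_n.
Proof.
apply/subsetP => p; rewrite inE => /eqP /three_cycle_hamming /three_cycleP [a [b [c [ab _ ac ->]]]].
exact: cycle3_Alt.
Qed.

Lemma Alt_gen_three_cycles : 'Alt_'I_n \subset <<three_cycles>>.
Proof.
have sub_Alt : <<three_cycles>> \subset 'Alt_'I_n by rewrite gen_subG three_cycles_Alt.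
have normal_Alt : <<three_cycles>> <| 'Alt_'I_n.
  rewrite /normal sub_Alt norms_gen //; apply/normsP => p _; apply/setP => x.
  by rewrite mem_conjg !inE hamming1J.
have := simple_Alt5 (T := 'I_n); rewrite card_ord => /(_ n_gt4) /simpleP [_ /(_ _ normal_Alt)].
case=> [gen1 | -> //].
have [a0 a1 a2] : [/\ 0 < n, 1 < n & 2 < n] by split; apply: leq_trans n_gt4.
pose a := Ordinal a0; pose b := Ordinal a1; pose c := Ordinal a2.
have : cycle3 a b c \in <<three_cycles>> by rewrite mem_gen // inE cycle3_hamming.
by rewrite gen1 inE => /eqP /permP /(_ a); rewrite perm1 cycle3E.
Qed.

Definition nbhd1_fixing (G : V -> V) :=
  [/\ injective G, forall x y, cag_adj (G x) (G y) <-> cag_adj x y,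
      G 1 = 1 & forall x, cag_adj 1 x -> G x = x].

Definition fixes_nbhd (G : V -> V) (h : V) :=
  G h = h /\ forall s, cag_adj 1 s -> G (s * h) = s * h.

Lemma cag_adjMr (x y h : V) : cag_adj (x * h) (y * h) <-> cag_adj x y.
Proof. by rewrite /cag_adj !sgvalM ?inE // invMg mulgA mulgK. Qed.

Lemma nbhd1_fixing_translate G h : nbhd1_fixing G -> fixes_nbhd G h ->
  nbhd1_fixing (fun v => G (v * h) * h^-1).
Proof.
case=> G_inj G_adj G1 _ [Gh G_nbhd]; split=> /=.
- by move=> x y /mulIg /G_inj /mulIg.
- move=> x y; apply: iff_trans (cag_adjMr _ _ h^-1) _.
  by apply: iff_trans (G_adj _ _) _; apply: cag_adjMr.
- by rewrite mul1g Gh mulgV.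
- by move=> x /G_nbhd ->; rewrite mulgK.
Qed.

Lemma fixes_nbhd_adj G h s : nbhd1_fixing G -> fixes_nbhd G h -> cag_adj 1 s ->
  fixes_nbhd G (s * h).
Proof.
move=> fixG [Gh G_nbhd] s1; split=> [|u u1]; first exact: G_nbhd.
case: (nbhd1_fixing_translate fixG (conj Gh G_nbhd)) => G'_inj G'_adj G'1 G'_nbhd.
have := fixed_sphere2 G'_inj G'_adj G'1 G'_nbhd n_gt4 u1 s1.
by move=> /= /(canRL (mulgKV h)); rewrite mulgA.
Qed.

Lemma nbhd1_fixing_id G : nbhd1_fixing G -> G =1 id.
Proof.
move=> fixG v; suff [] : fixes_nbhd G v by [].
rewrite -[v]sgvalK; move: (sgval v) (subgP v) => p Ap.
pose P p := p \in 'Alt_'I_n -> fixes_nbhd G (vtx p).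
suff : P p by apply.
apply: (@gen_prodg_ind _ three_cycles P); last exact: (subsetP Alt_gen_three_cycles).
  rewrite /P vtx1; by case: fixG => _ _ G1 G_nbhd1 _; split=> // s /G_nbhd1; rewrite mulg1.
move=> a a3 x Px Aax; have Aa := subsetP three_cycles_Alt a a3.
have Ax : x \in 'Alt_'I_n by rewrite -(groupMl _ Aa).
rewrite /vtx subgM //; apply: fixes_nbhd_adj => //; first exact: Px.
by apply/cag_adj1; rewrite subgK //; apply/three_cycle_hamming/eqP; rewrite inE in a3.
Qed.

End Propagation.

Theorem lemma3p2 (n : nat) (hn : 5 <= n) :
  forall g : {perm An_vertex n}, A_e g <-> g = 1%g.
Proof.
move=> g; split=> [[g_aut g1 g_nbhd1] | ->].
  apply/permP => v; rewrite perm1; apply: (nbhd1_fixing_id hn).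
  by split=> //; apply: perm_inj.
by split=> [x y | | x _]; rewrite ?perm1.
Qed.
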